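(* Let $G$ be a finite group. Then the poset $C(G)$ of cyclic subgroups of $G$ possesses a breaking point if and only if $G$ is either a cyclic $p$-group of order at least $p^2$ for some prime $p$, or a generalized quaternion $2$-group $Q_{2^n}$ for some $n\geq 3$.
   Context: For a finite group $G$, $C(G)$ denotes the set of cyclic subgroups of $G$, partially ordered by inclusion. A breaking point of $C(G)$ is a subgroup $H\in C(G)$ with $H\neq 1$ and $H\neq G$ such that for every $X\in C(G)$ we have $X\leq H$ or $H\leq X$. For $n\geq 3$, the generalized quaternion $2$-group is $Q_{2^n}=\langle a,b \mid a^{2^{n-2}}=b^2,\ a^{2^{n-1}}=1,\ b^{-1}ab=a^{-1}\rangle$, of order $2^n$. *)

From mathcomp Require Import all_boot all_order all_algebra all_fingroup all_solvable.
From mathcomp Require Import pgroup cyclic extremal.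
Set Implicit Arguments. Unset Strict Implicit. Unset Printing Implicit Defensive.

Definition cyclic_subgroup (gT : finGroupType) (G X : {group gT}) : Prop :=
  X \subset G /\ cyclic X.

Definition breaking_point (gT : finGroupType) (G H : {group gT}) : Prop :=
  [/\ cyclic_subgroup G H, H :!=: 1%g, H :!=: G &
      forall X : {group gT}, cyclic_subgroup G X -> X \subset H \/ H \subset X].

From mathcomp Require Import all_boot all_order all_algebra all_fingroup all_solvable.
From mathcomp Require Import pgroup cyclic extremal.
Set Implicit Arguments. Unset Strict Implicit. Unset Printing Implicit Defensive.
Import GroupScope.

(* A breaking point H of C(G) is comparable with every <[x]>, x in G. Taking
   x to be a p'-part or a p-part of an element outside H, with p a prime
   divisor of |H|, forces G to be a p-group; comparing H with the subgroups
   of order p then shows that H contains every element of order p, so G has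
   a unique subgroup of order p. Conversely, in a p-group of order at least
   p^2 with a unique subgroup 'Ohm_1(G) of order p, that subgroup lies in
   every nontrivial cyclic subgroup and is a breaking point. The p-groups
   with a unique subgroup of order p are the cyclic and generalized
   quaternion ones. *)

Lemma prime_sq_le_card_nontrivial (gT : finGroupType) p (G : {group gT}) :
  prime p -> (p ^ 2 <= #|G|)%N -> G :!=: 1.
Proof.
move=> p_pr le_p2G; rewrite -cardG_gt1 (leq_trans _ le_p2G) //.
by rewrite (leq_trans (prime_gt1 p_pr)) // leq_pmulr ?prime_gt0.
Qed.

Lemma Ohm1_breaking_point (gT : finGroupType) p (G : {group gT}) :
  prime p -> p.-group G -> #|'Ohm_1(G)| = p -> (p ^ 2 <= #|G|)%N ->
  breaking_point G 'Ohm_1(G)%G.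
Proof.
move=> p_pr pG oG1 le_p2G; split.
- by split; [exact: Ohm_sub | apply: prime_cyclic; rewrite oG1].
- by rewrite trivg_card1 oG1; case: eqP p_pr => // ->.
- apply: contraTneq le_p2G => /= G1_eq_G; rewrite -G1_eq_G oG1 -ltnNge.
  by rewrite -{1}(expn1 p) ltn_exp2l ?prime_gt1.
move=> X [sXG cycX]; have [->|ntX] := eqVneq X 1%G; first by left; exact: sub1G.
right; have pX := pgroupS sXG pG.
suff X1_eq_G1 : 'Ohm_1(X) = 'Ohm_1(G) by rewrite /= -X1_eq_G1 Ohm_sub.
apply/eqP; rewrite eqEcard OhmS //= oG1.
by rewrite (Ohm1_cyclic_pgroup_prime cycX pX ntX).
Qed.

Section BreakingPointStructure.

Variables (gT : finGroupType) (G H : {group gT}).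
Hypothesis bpH : breaking_point G H.

Let p := pdiv #|H|.

Let ntH : H :!=: 1. Proof. by case: bpH. Qed.
Let sHG : H \subset G. Proof. by case: bpH => -[]. Qed.

Lemma breaking_point_pdiv_prime : prime p.
Proof. by rewrite pdiv_prime ?cardG_gt1. Qed.

Let p_pr := breaking_point_pdiv_prime.
Let p_dvd_H : p %| #|H|. Proof. exact: pdiv_dvd. Qed.

Lemma breaking_point_cycle x : x \in G -> <[x]> \subset H \/ H \subset <[x]>.
Proof.
case: bpH => _ _ _ cmpH Gx; apply: (cmpH <[x]>%G).
by split; [rewrite cycle_subG | exact: cycle_cyclic].
Qed.

Let constt_in_G pi x : x \in G -> x.`_pi \in G.
Proof. by move=> Gx; rewrite groupX. Qed.

(* <[x.`_p']> cannot contain H, since p divides |H|. *)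
Lemma breaking_point_p'constt x : x \in G -> x.`_p^' \in H.
Proof.
move=> Gx; have [|sHx] := breaking_point_cycle (constt_in_G p^' Gx).
  by rewrite cycle_subG.
have p'H : p^'.-group H := pgroupS sHx (p_elt_constt p^' x).
by have := pgroupP p'H p p_pr p_dvd_H; rewrite !inE eqxx.
Qed.

(* Witnessed by any x in G \ H: its p-part lies outside H, so <[x.`_p]>
   contains H. *)
Lemma breaking_point_pgroup_sub : p.-group H.
Proof.
have /subsetPn[x Gx notHx] : ~~ (G \subset H).
  by case: bpH => _ _ nHG _; apply: contra nHG => sGH; rewrite eqEsubset sHG.
have [|//] := breaking_point_cycle (constt_in_G p Gx); last first.
  by move=> sHx; exact: pgroupS sHx (p_elt_constt p x).
rewrite cycle_subG => Hxp; case/negP: notHx.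
by rewrite -(consttC p x) groupM // breaking_point_p'constt.
Qed.

Lemma breaking_point_pgroup : p.-group G.
Proof.
apply/pgroupP => q q_pr q_dvd_G; have [x Gx ox] := Cauchy q_pr q_dvd_G.
have [sxH | sHx] := breaking_point_cycle Gx.
  have := mem_p_elt breaking_point_pgroup_sub (subsetP sxH _ (cycle_id x)).
  by rewrite /p_elt ox pnatE.
have : p %| q by rewrite -ox (dvdn_trans p_dvd_H) // cardSg.
by rewrite dvdn_prime2 // => /eqP ->; rewrite inE.
Qed.

Lemma breaking_point_Ohm1_sub : 'Ohm_1(G) \subset H.
Proof.
rewrite (OhmE 1 breaking_point_pgroup) gen_subG.
apply/subsetP => x; rewrite !inE => /andP[Gx xp].
have [|sHx] := breaking_point_cycle Gx; first by rewrite cycle_subG.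
suff ->: H :=: <[x]> by exact: cycle_id.
apply/eqP; rewrite eqEcard sHx /= -orderE (@leq_trans p) //.
  by rewrite dvdn_leq ?prime_gt0 // order_dvdn.
by rewrite dvdn_leq ?cardG_gt0.
Qed.

Lemma breaking_point_card_Ohm1 : #|'Ohm_1(G)| = p.
Proof.
have cycH : cyclic H by case: bpH => -[].
rewrite -(Ohm1_cyclic_pgroup_prime cycH breaking_point_pgroup_sub ntH).
suff ->: 'Ohm_1(G) = 'Ohm_1(H) by [].
apply/eqP; rewrite eqEsubset [_ \subset 'Ohm_1(G)]OhmS // andbT.
by rewrite -{1}(Ohm_id 1 G) OhmS ?breaking_point_Ohm1_sub.
Qed.

Lemma breaking_point_pdiv_sq_le_card : (p ^ 2 <= #|G|)%N.
Proof.
have pG := breaking_point_pgroup.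
have ltHG : H \proper G by case: bpH => _ _ nHG _; rewrite properEneq nHG sHG.
have := properG_ltn_log pG ltHG.
have [_ _ [m ->]] := pgroup_pdiv breaking_point_pgroup_sub ntH.
rewrite pfactorK // => lt_m_logG.
by rewrite (card_pgroup pG) (leq_exp2l _ _ (prime_gt1 p_pr)) (leq_trans _ lt_m_logG).
Qed.

End BreakingPointStructure.

Lemma breaking_pointP (gT : finGroupType) (G : {group gT}) :
  (exists H : {group gT}, breaking_point G H) <->
  exists p, [/\ prime p, p.-group G, #|'Ohm_1(G)| = p & (p ^ 2 <= #|G|)%N].
Proof.
split=> [[H bpH] | [p [p_pr pG oG1 le_p2G]]]; last first.
  by exists 'Ohm_1(G)%G; exact: Ohm1_breaking_point p_pr pG oG1 le_p2G.
exists (pdiv #|H|); split.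
- exact: breaking_point_pdiv_prime bpH.
- exact: breaking_point_pgroup bpH.
- exact: breaking_point_card_Ohm1 bpH.
- exact: breaking_point_pdiv_sq_le_card bpH.
Qed.

Lemma card_Ohm1_primeP (gT : finGroupType) p (G : {group gT}) :
  prime p -> p.-group G -> (p ^ 2 <= #|G|)%N ->
  #|'Ohm_1(G)| = p <->
  cyclic G \/ p = 2 /\ (exists2 n, 3 <= n & G \isog 'Q_(2 ^ n)).
Proof.
move=> p_pr pG le_p2G; have ntG := prime_sq_le_card_nontrivial p_pr le_p2G.
split=> [/(prime_Ohm1P pG ntG)/orP[cycG | /andP[/eqP p2 /eqP/quaternion_classP]]|].
- by left.
- by right.
case=> [cycG | [p2 quatG]]; apply/(prime_Ohm1P pG ntG); first by rewrite cycG.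
by rewrite p2 eqxx; apply/orP; right; apply/eqP/quaternion_classP.
Qed.

Theorem theorem1p1 (gT : finGroupType) (G : {group gT}) :
  (exists H : {group gT}, breaking_point G H) <->
  ((exists p : nat, [/\ prime p, (p.-group G)%g, cyclic G & p ^ 2 <= #|G|]) \/
   (exists2 n : nat, 3 <= n & G \isog 'Q_(2 ^ n))).
Proof.
apply: iff_trans (breaking_pointP G) _; split.
  case=> p [p_pr pG oG1 le_p2G].
  have [cycG | [_ quatG]] := (card_Ohm1_primeP p_pr pG le_p2G).1 oG1.
    by left; exists p.
  by right.
case=> [[p [p_pr pG cycG le_p2G]] | [n n_ge3 isoG]].
  exists p; split=> //; apply/(card_Ohm1_primeP p_pr pG le_p2G).
  by left.
have oG : #|G| = (2 ^ n)%N by rewrite (card_isog isoG) card_quaternion.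
have pG : 2.-group G by rewrite /pgroup oG pnatX pnat_id.
have le_4G : (2 ^ 2 <= #|G|)%N by rewrite oG leq_exp2l // ltnW.
exists 2; split=> //; apply/(card_Ohm1_primeP _ pG le_4G) => //.
by right; split=> //; exists n.
Qed.
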